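(* Let $\mathcal{T}$ be a finite nonempty set of positive integers and let $A\in\mathbb{R}$ with $|A|\ne1$ and $A\ne0$. Then $$\frac{\big(\sum_{t\in\mathcal{T}}A^t\big)^2}{\sum_{t\in\mathcal{T}}A^{2t}}\le\frac{1+|A|}{\big|1-|A|\big|}.$$ *)

From HB Require Import structures.
From mathcomp Require Import all_boot all_order all_algebra.
From mathcomp Require Export finmap.

From HB Require Import structures.
From mathcomp Require Import all_boot all_order all_algebra.
From mathcomp Require Import finmap ring.

(* Write a = |A|; by the triangle inequality it suffices to bound (sum_t a^t)^2
   for distinct exponents t.  For a < 1 expand the square and split the pairs
   (s, t) into s <= t and s > t.  For fixed s the a^t with t >= s are distinct
   powers of a from a^s on, so they sum to at most a^s / (1 - a), and those with
   t > s to at most a^(s+1) / (1 - a); this gives the factor (1 + a) / (1 - a).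
   For a > 1 the reflection t |-> N - t, N = max T, scales both sides by
   a^(2N) and replaces a by 1/a. *)

Set Implicit Arguments.
Unset Strict Implicit.
Unset Printing Implicit Defensive.
Import Order.TTheory GRing.Theory Num.Theory.
Local Open Scope ring_scope.

Section SumsOfDistinctPowers.
Variable R : realFieldType.

Lemma ler_sum_subset_uniq (I : eqType) (u v : seq I) (F : I -> R) :
  uniq u -> uniq v -> {subset u <= v} -> {in v, forall i, 0 <= F i} ->
  \sum_(i <- u) F i <= \sum_(i <- v) F i.
Proof.
move=> uu uv uv_sub F_ge0.
have u_perm : perm_eq [seq i <- v | i \in u] u.
  apply: uniq_perm; rewrite ?filter_uniq // => i.
  by rewrite mem_filter andb_idr // => /uv_sub.
rewrite [leRHS](bigID (mem u)) /= -[X in X + _]big_filter (perm_big _ u_perm).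
by rewrite lerDl big_seq_cond; apply: sumr_ge0 => i /andP[/F_ge0].
Qed.

Lemma geometric_sum_le (b : R) n : 0 <= b < 1 ->
  \sum_(i < n) b ^+ i <= (1 - b)^-1.
Proof.
case/andP=> b_ge0 b_lt1; have b1_gt0 : 0 < 1 - b by rewrite subr_gt0.
have sumE : (1 - b) * \sum_(i < n) b ^+ i = 1 - b ^+ n.
  by rewrite -opprB mulNr -subrX1 opprB.
by rewrite -(ler_pM2l b1_gt0) sumE mulfV ?gt_eqF // gerDl oppr_le0 exprn_ge0.
Qed.

Lemma sum_uniq_expr_le (b : R) m (u : seq nat) : 0 <= b < 1 -> uniq u ->
  {in u, forall k, (m <= k)%N} -> \sum_(k <- u) b ^+ k <= b ^+ m / (1 - b).
Proof.
move=> b01 uu u_ge_m; have b_ge0 : 0 <= b by case/andP: b01.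
set N := (\max_(k <- u) k).+1.
have u_sub : {subset u <= iota m N}.
  move=> k ku; rewrite mem_iota u_ge_m //=.
  by rewrite ltn_addl // ltnS (leq_bigmax_seq k).
have powers_ge0 : {in iota m N, forall k, 0 <= b ^+ k}.
  by move=> k _; rewrite exprn_ge0.
apply: le_trans (ler_sum_subset_uniq uu (iota_uniq _ _) u_sub powers_ge0) _.
rewrite -[m]addn0 iotaDl big_map addn0.
under eq_bigr do rewrite exprD.
rewrite -mulr_sumr ler_wpM2l ?exprn_ge0 //.
have -> : iota 0 N = index_iota 0 N by rewrite /index_iota subn0.
by rewrite big_mkord geometric_sum_le.
Qed.

Lemma sqr_sum_expr_lt1 (b : R) (r : seq nat) : 0 <= b < 1 -> uniq r ->
  (\sum_(t <- r) b ^+ t) ^+ 2 <= (1 + b) / (1 - b) * \sum_(t <- r) (b ^+ t) ^+ 2.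
Proof.
move=> b01 ur; have [b_ge0 b_lt1] := andP b01.
have tail_le m (P : pred nat) : (forall t, P t -> (m <= t)%N) ->
    \sum_(t <- r | P t) b ^+ t <= b ^+ m / (1 - b).
  move=> P_ge_m; rewrite -big_filter sum_uniq_expr_le ?filter_uniq //.
  by move=> t; rewrite mem_filter => /andP[/P_ge_m].
have lower_triangle : \sum_(s <- r) \sum_(t <- r | (t < s)%N) b ^+ s * b ^+ t
    = \sum_(s <- r) b ^+ s * \sum_(t <- r | (s < t)%N) b ^+ t.
  rewrite (exchange_big_dep xpredT) //=; apply: eq_bigr => s _.
  by rewrite mulr_sumr; apply: eq_bigr => t _; rewrite mulrC.
have -> : (\sum_(t <- r) b ^+ t) ^+ 2 =
    \sum_(s <- r) b ^+ s * \sum_(t <- r | (s <= t)%N) b ^+ t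
  + \sum_(s <- r) b ^+ s * \sum_(t <- r | (s < t)%N) b ^+ t.
  rewrite -lower_triangle -big_split expr2 mulr_suml; apply: eq_bigr => s _.
  rewrite mulr_sumr (bigID (fun t => s <= t)%N) /= mulr_sumr.
  by under [X in _ + X]eq_bigl do rewrite -ltnNge.
rewrite -big_split mulr_sumr ler_sum // => s _.
have b1_neq0 : 1 - b != 0 by rewrite subr_eq0 eq_sym lt_eqF.
have -> : (1 + b) / (1 - b) * (b ^+ s) ^+ 2
    = b ^+ s * (b ^+ s / (1 - b)) + b ^+ s * (b ^+ s.+1 / (1 - b)).
  by rewrite [b ^+ s.+1]exprS; field.
by apply: lerD; apply: ler_wpM2l; rewrite ?exprn_ge0 //; apply: tail_le.
Qed.

Lemma sqr_sum_expr_gt1 (a : R) (r : seq nat) : 1 < a -> uniq r ->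
  (\sum_(t <- r) a ^+ t) ^+ 2 <= (a + 1) / (a - 1) * \sum_(t <- r) (a ^+ t) ^+ 2.
Proof.
move=> a_gt1 ur; have a_gt0 : 0 < a := lt_trans ltr01 a_gt1.
have a_neq0 : a != 0 by rewrite gt_eqF.
set N := \max_(t <- r) t; set u := map (subn N) r.
have le_N t : t \in r -> (t <= N)%N by move=> tr; apply: leq_bigmax_seq.
have reflect_expr t : t \in r -> a ^+ t = a ^+ N * a^-1 ^+ (N - t).
  by move=> /le_N tN; rewrite exprVn -{1}(subnK tN) exprD mulrC mulKf // expf_neq0.
have uu : uniq u.
  rewrite map_inj_in_uniq // => s t /le_N sN /le_N tN /(congr1 (subn N)).
  by rewrite !subKn.
have sumE (F : R -> R) : \sum_(t <- r) F (a ^+ t) = \sum_(k <- u) F (a ^+ N * a^-1 ^+ k).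
  by rewrite big_map big_seq [RHS]big_seq; apply: eq_bigr => t /reflect_expr ->.
rewrite (sumE id) (sumE (fun x => x ^+ 2)) -mulr_sumr.
under [X in _ <= _ * X]eq_bigr do rewrite exprMn.
rewrite -mulr_sumr exprMn [leRHS]mulrCA ler_wpM2l ?sqr_ge0 //.
have -> : (a + 1) / (a - 1) = (1 + a^-1) / (1 - a^-1).
  by field; rewrite a_neq0 subr_eq0 gt_eqF.
by rewrite sqr_sum_expr_lt1 // invr_ge0 ltW //= invf_lt1.
Qed.

Lemma sqr_sum_expr_le (a : R) (r : seq nat) : 0 < a -> a != 1 -> uniq r ->
  (\sum_(t <- r) a ^+ t) ^+ 2 <= (1 + a) / `|1 - a| * \sum_(t <- r) (a ^+ t) ^+ 2.
Proof.
move=> a_gt0 + ur; rewrite neq_lt => /orP[a_lt1|a_gt1].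
  by rewrite gtr0_norm ?subr_gt0 // sqr_sum_expr_lt1 ?ltW ?a_lt1.
by rewrite ltr0_norm ?subr_lt0 // opprB addrC sqr_sum_expr_gt1.
Qed.
End SumsOfDistinctPowers.

Local Open Scope fset_scope.

Theorem proposition4 (R : realFieldType) (T : {fset nat}) (A : R)
  (hT0 : T != fset0) (hTpos : forall t, t \in T -> (0 < t)%N)
  (hA1 : `|A| != 1) (hA0 : A != 0) :
  (\sum_(t <- T) A ^+ t) ^+ 2 / (\sum_(t <- T) A ^+ (2 * t)) <=
  (1 + `|A|) / `|1 - `|A| |.
Proof.
set a := `|A|; have a_gt0 : 0 < a by rewrite normr_gt0.
have sum_sqrE : \sum_(t <- T) A ^+ (2 * t) = \sum_(t <- T) (a ^+ t) ^+ 2.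
  by apply: eq_bigr => t _; rewrite mulnC exprM -normrX real_normK ?num_real.
have sum_sqr_gt0 : 0 < \sum_(t <- T) (a ^+ t) ^+ 2.
  have [T0|[t tT]] := fset_0Vmem T; first by rewrite T0 eqxx in hT0.
  rewrite (bigD1_seq t) ?fset_uniq //= ltr_wpDr ?sumr_ge0 => // [i _|].
    exact: sqr_ge0.
  by rewrite exprn_gt0 ?exprn_gt0.
have norm_sum_le : `|\sum_(t <- T) A ^+ t| <= \sum_(t <- T) a ^+ t.
  by apply: le_trans (ler_norm_sum _ _ _) _; apply: ler_sum => t _; rewrite normrX.
rewrite sum_sqrE ler_pdivrMr //.
apply: le_trans (sqr_sum_expr_le a_gt0 hA1 (fset_uniq T)).
rewrite -[leLHS]real_normK ?num_real // ler_sqr ?nnegrE //.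
by apply: sumr_ge0 => t _; rewrite exprn_ge0 ?ltW.
Qed.
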